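(* Let $(\mathscr{M},g)$ be a smooth complete Riemannian manifold, $x_0\in\mathscr M$, $r>0$, and $u\in C(\overline B_r(x_0))$. Suppose $u(y_0)=l$ for some $y_0\in\overline B_{r/2}(x_0)$, that $u\ge t$ on $\overline B_r(x_0)\setminus B_{5r/6}(x_0)$, and that $l<t$. Then for every $a\ge0$, \[ A\big(a,\overline B_{r/6}(y_0)/B_r(x_0),u\big)\subset B_{5r/6}(x_0)\cap\Big\{u\le l+\frac{ar^2}{36}\Big\}. \]
   Context: $\rho$ is the Riemannian distance and $B_s(z)$ the geodesic ball. For a domain $\Omega$, $u\in C(\overline\Omega)$, $a\ge0$ and compact $E$, $A(a,E/\Omega,u)$ is the set of $x\in\overline\Omega$ such that for some $y\in E$, $\inf_{\overline\Omega}\{u+\frac a2\rho^2(\cdot,y)\}=u(x)+\frac a2\rho^2(x,y)$. *)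

From Stdlib Require Import Reals.
Open Scope R_scope.

Record MetricSpace := {
  carrier :> Type;
  rho : carrier -> carrier -> R;
  rho_nonneg : forall x y, 0 <= rho x y;
  rho_eq0 : forall x y, rho x y = 0 <-> x = y;
  rho_sym : forall x y, rho x y = rho y x;
  rho_triangle : forall x y z, rho x z <= rho x y + rho y z
}.

Arguments rho {m} _ _.

Section Defs.
Variable M : MetricSpace.

Definition ball (z : M) (s : R) : M -> Prop := fun x => rho x z < s.
Definition cball (z : M) (s : R) : M -> Prop := fun x => rho x z <= s.

Definition closure (S : M -> Prop) : M -> Prop :=
  fun x => forall eps, 0 < eps -> exists z, S z /\ rho x z < eps.

Definition continuous_on (D : M -> Prop) (u : M -> R) : Prop :=
  forall x, D x -> forall eps, 0 < eps -> exists delta, 0 < delta /\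
    forall z, D z -> rho z x < delta -> Rabs (u z - u x) < eps.

Definition Aset (a : R) (E Omega : M -> Prop) (u : M -> R) : M -> Prop :=
  fun x => closure Omega x /\
    exists y, E y /\
      forall z, closure Omega z ->
        u x + a / 2 * (rho x y) ^ 2 <= u z + a / 2 * (rho z y) ^ 2.
End Defs.

Arguments ball {M} _ _.
Arguments cball {M} _ _.
Arguments closure {M} _.
Arguments continuous_on {M} _ _.
Arguments Aset {M} _ _ _ _.

From Stdlib Require Import Reals Lra.
Open Scope R_scope.

(* Comparing the minimised quantity u + a/2 rho^2(., y) at the minimiser x
   and at y0 gives u x <= l + a/2 (r/6)^2.  If x were outside B_{5r/6}(x0),
   the triangle inequality would put it at distance >= r/6 >= rho(y0, y) from
   y, so the same comparison would give u x <= l < t <= u x. *)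

Lemma closure_subset (M : MetricSpace) (S : M -> Prop) (x : M) :
  S x -> closure S x.
Proof.
  intros Hx eps Heps. exists x. split; [exact Hx|].
  rewrite (proj2 (rho_eq0 M x x) eq_refl). exact Heps.
Qed.

Lemma closure_ball_le (M : MetricSpace) (z x : M) (s : R) :
  closure (ball z s) x -> rho x z <= s.
Proof.
  intros Hx. destruct (Rle_dec (rho x z) s) as [Hle|Hgt]; [exact Hle|].
  destruct (Hx (rho x z - s)) as [w [Hw Hxw]]; [lra|].
  unfold ball in Hw. pose proof (rho_triangle M x w z). lra.
Qed.

Lemma rho_triangle3 (M : MetricSpace) (x y w z : M) :
  rho x z <= rho x y + rho y w + rho w z.
Proof.
  pose proof (rho_triangle M x y z). pose proof (rho_triangle M y w z). lra.
Qed.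

Lemma half_weighted_sq_le (a p q : R) :
  0 <= a -> 0 <= p -> p <= q -> a / 2 * p ^ 2 <= a / 2 * q ^ 2.
Proof.
  intros Ha Hp Hpq. apply Rmult_le_compat_l; [lra|]. apply pow_incr; lra.
Qed.

Theorem lemma3p3 (M : MetricSpace) (x0 y0 : M) (r l t : R) (u : M -> R) :
  0 < r ->
  continuous_on (cball x0 r) u ->
  cball x0 (r / 2) y0 ->
  u y0 = l ->
  (forall x, cball x0 r x -> ~ ball x0 (5 * r / 6) x -> t <= u x) ->
  l < t ->
  forall a : R, 0 <= a ->
  forall x, Aset a (cball y0 (r / 6)) (ball x0 r) u x ->
    ball x0 (5 * r / 6) x /\ u x <= l + a * r ^ 2 / 36.
Proof.
  intros Hr _ Hy0 Hl Ht Hlt a Ha x [Hcx [y [Hy Hmin]]].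
  unfold cball in Hy0, Hy.
  assert (Hxr : rho x x0 <= r) by exact (closure_ball_le M x0 x r Hcx).
  assert (Hy0r : ball x0 r y0) by (unfold ball; lra).
  assert (Hmin0 := Hmin y0 (closure_subset M _ y0 Hy0r)).
  rewrite Hl in Hmin0.
  assert (Hyy0 : a / 2 * rho y0 y ^ 2 <= a / 2 * (r / 6) ^ 2).
  { rewrite (rho_sym M y0 y). apply half_weighted_sq_le; [exact Ha | apply rho_nonneg | exact Hy]. }
  assert (Hxy : 0 <= a / 2 * rho x y ^ 2).
  { apply Rmult_le_pos; [lra | apply pow_le, rho_nonneg]. }
  split.
  - destruct (Rlt_dec (rho x x0) (5 * r / 6)) as [Hin|Hout]; [exact Hin|exfalso].
    assert (Htx : t <= u x) by (apply Ht; [unfold cball; lra | exact Hout]).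
    assert (Hfar : r / 6 <= rho x y) by (pose proof (rho_triangle3 M x y y0 x0); lra).
    pose proof (half_weighted_sq_le a (r / 6) (rho x y) Ha ltac:(lra) Hfar).
    lra.
  - assert (0 <= a * r ^ 2) by (apply Rmult_le_pos; [lra | apply pow_le; lra]).
    lra.
Qed.
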